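(* Let $a,b,c,d\in\mathbb{Q}$ satisfy $a^4+b^4+c^4+d^4=(a+b+c+d)^4$, with at least three of $a,b,c,d$ non-zero. Put $F=a^2+ab+b^2$, $G=c^2+cd+d^2$ and $H=(a+b)^2+(a+b)(c+d)+(c+d)^2$, and let $t=\frac{H+F}{G}$ (which also equals $\frac{G}{H-F}=\frac{c^2+cd+d^2}{(a+c+d)(b+c+d)}$). Then $t>0$.
   Context: A solution $(a,b,c,d)$ of $a^4+b^4+c^4+d^4=(a+b+c+d)^4$ is called non-trivial if at least three of $a,b,c,d$ are non-zero. For such a solution $G\neq 0$ and $H-F\neq 0$, and the identity $X^4+Y^4+(X+Y)^4=2(X^2+XY+Y^2)^2$ gives $F^2+G^2=H^2$, so that $(H+F)/G=G/(H-F)$. *)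

From mathcomp Require Import all_boot all_order all_algebra.
Set Implicit Arguments. Unset Strict Implicit. Unset Printing Implicit Defensive.
Import Order.TTheory GRing.Theory Num.Theory.
Local Open Scope ring_scope.

Definition nnz (a b c d : rat) : nat :=
  (nat_of_bool (a != 0%R) + nat_of_bool (b != 0%R)
   + nat_of_bool (c != 0%R) + nat_of_bool (d != 0%R))%N.

Definition nontrivial_solution (a b c d : rat) : Prop :=
  a ^+ 4 + b ^+ 4 + c ^+ 4 + d ^+ 4 = (a + b + c + d) ^+ 4 /\ (3 <= nnz a b c d)%N.

Definition Fq (a b c d : rat) : rat := a ^+ 2 + a * b + b ^+ 2.
Definition Gq (a b c d : rat) : rat := c ^+ 2 + c * d + d ^+ 2.
Definition Hq (a b c d : rat) : rat :=
  (a + b) ^+ 2 + (a + b) * (c + d) + (c + d) ^+ 2.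
Definition tq (a b c d : rat) : rat := (Hq a b c d + Fq a b c d) / Gq a b c d.

From mathcomp Require Import all_boot all_order all_algebra.
From mathcomp Require Import lra.
Set Implicit Arguments. Unset Strict Implicit. Unset Printing Implicit Defensive.
Import Order.TTheory GRing.Theory Num.Theory.
Local Open Scope ring_scope.

(* Three non-zero entries force (a, b) <> (0, 0) and (c, d) <> (0, 0),
   so H + F > 0 and G > 0. *)

Lemma eisenstein_norm_ge0 (R : realFieldType) (x y : R) :
  0 <= x ^+ 2 + x * y + y ^+ 2.
Proof. by nra. Qed.

Lemma eisenstein_norm_gt0 (R : realFieldType) (x y : R) :
  (x != 0) || (y != 0) -> 0 < x ^+ 2 + x * y + y ^+ 2.
Proof.
have [->|y_neq0 _] := eqVneq y 0.
  by rewrite orbF mulr0 addr0 expr0n /= addr0 exprn_even_gt0.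
have : 0 < y ^+ 2 by rewrite exprn_even_gt0.
by nra.
Qed.

Lemma nnz_ge3_pairs_neq0 (a b c d : rat) : (3 <= nnz a b c d)%N ->
  ((a != 0) || (b != 0)) && ((c != 0) || (d != 0)).
Proof. by rewrite /nnz; case: (a != 0) (b != 0) (c != 0) (d != 0) => [] [] [] []. Qed.

Theorem mainTheorem1 (a b c d : rat) :
  nontrivial_solution a b c d -> 0 < tq a b c d.
Proof.
case=> _ /nnz_ge3_pairs_neq0 /andP[ab_neq0 cd_neq0].
rewrite /tq /Hq /Fq /Gq; apply: divr_gt0; last exact: eisenstein_norm_gt0.
exact: ltr_wpDl (eisenstein_norm_ge0 _ _) (eisenstein_norm_gt0 ab_neq0).
Qed.
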